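(* Let $g_0(x) = 3x^2-1$, $g_1(x) = 3x^2-3x+1$, $g_2(x) = 3x^2+3x+1 \in \mathbb{Z}[x]$ and $\Phi_3(x) = x^2+x+1$. Let $q$ be a prime with $q\equiv 1 \pmod 6$, and let $s$ be an integer with $g_1(s)\equiv 0 \pmod q$ or $g_2(s) \equiv 0 \pmod q$. Define \begin{align*} f_9(x) &= 3qx^2+(6s-3)x+g_1(s)/q, & f_{10}(x) &= 3q^2x^2+(6s+3)qx+g_2(s),\\ f_{11}(x) &= 3q^2x^2+(6s-3)qx+g_1(s), & f_{12}(x) &= 3qx^2+(6s+3)x+g_2(s)/q. \end{align*} Then for all $x\in\mathbb{Z}$, \[ \Phi_3(g_0(qx+s)) = \begin{cases} q\,f_9(x)f_{10}(x), & \text{if } q \mid g_1(s),\\ q\,f_{11}(x)f_{12}(x), & \text{if } q \mid g_2(s),\end{cases} \] and (in each case in which they have integer coefficients) the polynomials $f_9, f_{10}, f_{11}, f_{12}$ are irreducible over $\mathbb{Z}$.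
   Context: A polynomial in $\mathbb{Z}[x]$ is called irreducible over $\mathbb{Z}$ if it is not a product of two non-constant polynomials with integer coefficients. *)

From HB Require Import structures.
From mathcomp Require Import all_boot all_order all_algebra.
Set Implicit Arguments. Unset Strict Implicit. Unset Printing Implicit Defensive.
Import Order.TTheory GRing.Theory Num.Theory.
Local Open Scope ring_scope.

Definition g0 : {poly int} := 3%:P * 'X^2 - 1.
Definition g1 : {poly int} := 3%:P * 'X^2 - 3%:P * 'X + 1.
Definition g2 : {poly int} := 3%:P * 'X^2 + 3%:P * 'X + 1.
Definition Phi3 : {poly int} := 'X^2 + 'X + 1.

(* f9 and f12 involve the exact quotients g1(s)/q and g2(s)/q; they are only
   used under the hypothesis that q divides g1(s) (resp. g2(s)). *)
Definition f9 (q : nat) (s : int) : {poly int} :=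
  (3 * q%:Z)%:P * 'X^2 + (6 * s - 3)%:P * 'X + (g1.[s] %/ q%:Z)%Z%:P.
Definition f10 (q : nat) (s : int) : {poly int} :=
  (3 * q%:Z ^+ 2)%:P * 'X^2 + ((6 * s + 3) * q%:Z)%:P * 'X + (g2.[s])%:P.
Definition f11 (q : nat) (s : int) : {poly int} :=
  (3 * q%:Z ^+ 2)%:P * 'X^2 + ((6 * s - 3) * q%:Z)%:P * 'X + (g1.[s])%:P.
Definition f12 (q : nat) (s : int) : {poly int} :=
  (3 * q%:Z)%:P * 'X^2 + (6 * s + 3)%:P * 'X + (g2.[s] %/ q%:Z)%Z%:P.

Definition irreducible_Z (p : {poly int}) : Prop :=
  ~ exists a b : {poly int}, (1 < size a)%N /\ (1 < size b)%N /\ p = a * b.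

From HB Require Import structures.
From mathcomp Require Import all_boot all_order all_algebra.
From mathcomp Require Import ring zify.
Set Implicit Arguments. Unset Strict Implicit. Unset Printing Implicit Defensive.
Import Order.TTheory GRing.Theory Num.Theory.
Local Open Scope ring_scope.

(* Since Phi3(3y^2 - 1) = g1(y) g2(y), substituting y = qx + s factors the left
   side as f11(x) f10(x), and when q divides g1(s) (resp. g2(s)) one pulls q out
   of f11 = q f9 (resp. f10 = q f12).  Each f_i is a quadratic of negative
   discriminant (-3q^2 or -3), and a product of two linear factors over a
   real domain always has a square, hence nonnegative, discriminant. *)

Section RealQuadratic.

Variable R : realDomainType.

Definition quad (A B C : R) : {poly R} := A%:P * 'X^2 + B%:P * 'X + C%:P.

Definition discr (A B C : R) : R := B ^+ 2 - 4 * A * C.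

Lemma coef_quad A B C j :
  (quad A B C)`_j = [:: C; B; A]`_j.
Proof.
rewrite /quad !coefD !coefCM coefXn coefX coefC.
by case: j => [|[|[|j]]] /=; rewrite ?mulr0 ?mulr1 ?addr0 ?add0r ?nth_nil.
Qed.

Lemma discr_mul_linear (a b : {poly R}) :
  (size a <= 2)%N -> (size b <= 2)%N ->
  discr (a * b)`_2 (a * b)`_1 (a * b)`_0 = (a`_0 * b`_1 - a`_1 * b`_0) ^+ 2.
Proof.
move=> /leq_sizeP a2 /leq_sizeP b2.
rewrite /discr !coefM !big_ord_recr !big_ord0 /= !subnn !subn0 subSnn.
by rewrite (a2 2%N) // (b2 2%N) // !mulr0 !mul0r !add0r !addr0; ring.
Qed.

Lemma discr_ge0_of_factor (A B C : R) (a b : {poly R}) :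
  (1 < size a)%N -> (1 < size b)%N -> quad A B C = a * b ->
  0 <= discr A B C.
Proof.
move=> a1 b1 eq_ab.
have a_neq0 : a != 0 by rewrite -size_poly_gt0 ltnW.
have b_neq0 : b != 0 by rewrite -size_poly_gt0 ltnW.
have size_ab : (size (a * b)%R <= 3)%N.
  by rewrite -eq_ab; apply/leq_sizeP => j j_ge3; rewrite coef_quad nth_default.
rewrite size_mul // -subn1 in size_ab.
have -> : discr A B C = discr (a * b)`_2 (a * b)`_1 (a * b)`_0.
  by rewrite -eq_ab !coef_quad.
have [a2 b2] : (size a <= 2)%N /\ (size b <= 2)%N.
  by move: (size a) (size b) a1 b1 size_ab => m n; lia.
by rewrite discr_mul_linear ?sqr_ge0.
Qed.

End RealQuadratic.

Lemma quad_irreducible_Z (A B C : int) :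
  discr A B C < 0 -> irreducible_Z (quad A B C).
Proof.
move=> discr_lt0 [a [b [a1 [b1 eq_ab]]]].
by move: discr_lt0; rewrite ltNge (discr_ge0_of_factor a1 b1 eq_ab).
Qed.

Lemma Phi3_g0 (y : int) : Phi3.[g0.[y]] = g1.[y] * g2.[y].
Proof. by rewrite /Phi3 /g0 /g1 /g2 !hornerE /=; ring. Qed.

Section Substitution.

Variables (q : nat) (s : int).

Lemma g1_shift (x : int) : g1.[q%:Z * x + s] = (f11 q s).[x].
Proof. by rewrite /f11 /g1 !hornerE /=; ring. Qed.

Lemma g2_shift (x : int) : g2.[q%:Z * x + s] = (f10 q s).[x].
Proof. by rewrite /f10 /g2 !hornerE /=; ring. Qed.

Lemma f9_scale (x : int) : (q%:Z %| g1.[s])%Z ->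
  q%:Z * (f9 q s).[x] = (f11 q s).[x].
Proof.
rewrite /f9 /f11 => /divzK; set c := (_ %/ _)%Z; clearbody c => <-.
by rewrite !hornerE /=; ring.
Qed.

Lemma f12_scale (x : int) : (q%:Z %| g2.[s])%Z ->
  q%:Z * (f12 q s).[x] = (f10 q s).[x].
Proof.
rewrite /f12 /f10 => /divzK; set c := (_ %/ _)%Z; clearbody c => <-.
by rewrite !hornerE /=; ring.
Qed.

Lemma f9_irreducible : (q%:Z %| g1.[s])%Z -> irreducible_Z (f9 q s).
Proof.
rewrite /f9 => /divzK; set c := (_ %/ _)%Z; clearbody c => g1E.
apply: quad_irreducible_Z.
have -> : discr (3 * q%:Z) (6 * s - 3) c = (6 * s - 3) ^+ 2 - 12 * (c * q%:Z).
  by rewrite /discr; ring.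
by rewrite g1E /g1 !hornerE /=; lia.
Qed.

Lemma f12_irreducible : (q%:Z %| g2.[s])%Z -> irreducible_Z (f12 q s).
Proof.
rewrite /f12 => /divzK; set c := (_ %/ _)%Z; clearbody c => g2E.
apply: quad_irreducible_Z.
have -> : discr (3 * q%:Z) (6 * s + 3) c = (6 * s + 3) ^+ 2 - 12 * (c * q%:Z).
  by rewrite /discr; ring.
by rewrite g2E /g2 !hornerE /=; lia.
Qed.

Lemma f10_irreducible : (0 < q)%N -> irreducible_Z (f10 q s).
Proof.
move=> q_gt0; apply: quad_irreducible_Z.
have -> : discr (3 * q%:Z ^+ 2) ((6 * s + 3) * q%:Z) g2.[s] = - 3 * q%:Z ^+ 2.
  by rewrite /discr /g2 !hornerE /=; ring.
by rewrite mulNr oppr_lt0 mulr_gt0 // exprn_gt0 // ltz_nat.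
Qed.

Lemma f11_irreducible : (0 < q)%N -> irreducible_Z (f11 q s).
Proof.
move=> q_gt0; apply: quad_irreducible_Z.
have -> : discr (3 * q%:Z ^+ 2) ((6 * s - 3) * q%:Z) g1.[s] = - 3 * q%:Z ^+ 2.
  by rewrite /discr /g1 !hornerE /=; ring.
by rewrite mulNr oppr_lt0 mulr_gt0 // exprn_gt0 // ltz_nat.
Qed.

End Substitution.

(* Primality of q and q = 1 (mod 6) only guarantee that some s meets the
   divisibility hypotheses; the conclusion needs nothing beyond q > 0. *)
Theorem lemma3 (q : nat) (s : int) :
  prime q -> (q %% 6 = 1)%N ->
  (q%:Z %| g1.[s])%Z \/ (q%:Z %| g2.[s])%Z ->
  (forall x : int,
     ((q%:Z %| g1.[s])%Z ->
        Phi3.[g0.[q%:Z * x + s]] = q%:Z * (f9 q s).[x] * (f10 q s).[x]) /\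
     ((q%:Z %| g2.[s])%Z ->
        Phi3.[g0.[q%:Z * x + s]] = q%:Z * (f11 q s).[x] * (f12 q s).[x])) /\
  ((q%:Z %| g1.[s])%Z -> irreducible_Z (f9 q s)) /\
  irreducible_Z (f10 q s) /\
  irreducible_Z (f11 q s) /\
  ((q%:Z %| g2.[s])%Z -> irreducible_Z (f12 q s)).
Proof.
move=> /prime_gt0 q_gt0 _ _.
have factor (x : int) : Phi3.[g0.[q%:Z * x + s]] = (f11 q s).[x] * (f10 q s).[x].
  by rewrite Phi3_g0 g1_shift g2_shift.
split=> [x|].
  split=> dvd_q; rewrite factor.
    by rewrite -(f9_scale x dvd_q).
  by rewrite -(f12_scale x dvd_q) mulrCA mulrA.
split; first exact: f9_irreducible.
split; first exact: f10_irreducible.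
split; first exact: f11_irreducible.
exact: f12_irreducible.
Qed.
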